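(* Suppose $\gcd(\alpha,|\langle\Theta\rangle|)=1$, and let $\mathcal{C}$ be an $\mathbb{F}_q\mathcal{R}$-skew cyclic code of length $(\alpha,\beta)$ generated as a left $\mathcal{R}[x;\theta]$-submodule of $R_{\alpha,\beta}$ by $(f(x),0)$ and $(0,g(x))$, with $f(x)\in\mathbb{F}_q[x;\Theta]/\langle x^\alpha-1\rangle$ and $g(x)\in\mathcal{R}[x;\theta]/\langle x^\beta-1\rangle$. Then $\mathcal{C}=\mathcal{C}'\otimes\mathscr{C}$, where $\mathcal{C}'$ is a cyclic code of length $\alpha$ over $\mathbb{F}_q$ and $\mathscr{C}$ is a skew cyclic code of length $\beta$ over $\mathcal{R}$.
   Context: Let $p$ be a prime, $q=p^m$, $\mathcal{R}=\mathbb{F}_q[u]/\langle u^2-u\rangle$. Fix $i$; $\Theta(a)=a^{p^i}$ on $\mathbb{F}_q$ and $\theta(a+ub)=a^{p^i}+ub^{p^i}$ on $\mathcal{R}$; $\eta(a+ub)=a$; $|\langle\Theta\rangle|$ denotes the order of $\Theta$. $\mathbb{F}_q[x;\Theta]$, $\mathcal{R}[x;\theta]$ are skew polynomial rings with multiplication determined by $(ax^i)(bx^j)=a\Theta^i(b)x^{i+j}$ (resp. with $\theta$). $R_{\alpha,\beta}=\mathbb{F}_q[x;\Theta]/\langle x^\alpha-1\rangle\times\mathcal{R}[x;\theta]/\langle x^\beta-1\rangle$, identified with $\mathbb{F}_q^\alpha\times\mathcal{R}^\beta$ via coefficient vectors, is a left $\mathcal{R}[x;\theta]$-module via $r(x)*(k(x),t(x))=(\eta(r(x))k(x),r(x)t(x))$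 ($\eta$ coefficientwise, reduction modulo $x^\alpha-1$, $x^\beta-1$). An $\mathbb{F}_q\mathcal{R}$-skew cyclic code of length $(\alpha,\beta)$ is an $\mathcal{R}$-submodule of $\mathbb{F}_q^\alpha\times\mathcal{R}^\beta$ (with $s*(x,y)=(\eta(s)x,sy)$ componentwise) closed under $\sigma(x_0,\dots,x_{\alpha-1},y_0,\dots,y_{\beta-1})=(\Theta(x_{\alpha-1}),\Theta(x_0),\dots,\Theta(x_{\alpha-2}),\theta(y_{\beta-1}),\theta(y_0),\dots,\theta(y_{\beta-2}))$. A skew cyclic code of length $n$ over $\mathcal{R}$ is an $\mathcal{R}$-submodule of $\mathcal{R}^n$ closed under $(c_0,\dots,c_{n-1})\mapsto(\theta(c_{n-1}),\theta(c_0),\dots,\theta(c_{n-2}))$. For $A\subseteq\mathbb{F}_q^\alpha$, $B\subseteq\mathcal{R}^\beta$, $A\otimes B=\{(a,b):a\in A,b\in B\}$. *)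

From HB Require Import structures.
From mathcomp Require Import all_boot all_order all_algebra.
Set Implicit Arguments. Unset Strict Implicit. Unset Printing Implicit Defensive.
Import GRing.Theory.
Local Open Scope ring_scope.

(* F plays the role of F_q (a finite field of characteristic p).
   The ring R = F[u]/<u^2-u> is represented by pairs (a,b) : F * F,
   standing for a + u b.  Addition is componentwise (product zmodType),
   multiplication uses u^2 = u. *)

Section Defs.
Variable F : finFieldType.

Definition Ru := (F * F)%type.

Definition Rmul (x y : Ru) : Ru :=
  (x.1 * y.1, x.1 * y.2 + x.2 * y.1 + x.2 * y.2).

Definition Theta (p i : nat) (a : F) : F := a ^+ (p ^ i).
Definition theta (p i : nat) (x : Ru) : Ru := (Theta p i x.1, Theta p i x.2).
Definition eta (x : Ru) : F := x.1.

Definition is_order_Theta (p i n : nat) : Prop :=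
  (0 < n)%N /\ (forall a : F, iter n (Theta p i) a = a) /\
  (forall k, (0 < k < n)%N -> exists a : F, iter k (Theta p i) a != a).

(* Left action of a skew polynomial r(x) = sum_j r_j x^j in F[x;Theta]
   (coefficient list r) on k(x) in F[x;Theta]/<x^alpha - 1>, given by its
   coefficient vector: the skew product r(x)k(x), reduced modulo the left
   ideal generated by x^alpha - 1 (i.e. x^e is replaced by x^(e mod alpha)). *)
Definition skew_mulF (p i alpha : nat) (r : seq F) (k : {ffun 'I_alpha -> F})
  : {ffun 'I_alpha -> F} :=
  [ffun l : 'I_alpha => \sum_(j < size r) \sum_(l' < alpha | ((j + l') %% alpha == l)%N)
      r`_j * iter j (Theta p i) (k l')].

Definition skew_mulR (p i beta : nat) (r : seq Ru) (t : {ffun 'I_beta -> Ru})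
  : {ffun 'I_beta -> Ru} :=
  [ffun l : 'I_beta => \sum_(j < size r) \sum_(l' < beta | ((j + l') %% beta == l)%N)
      Rmul (nth 0 r j) (iter j (theta p i) (t l'))].

Definition act (p i alpha beta : nat) (r : seq Ru)
  (c : {ffun 'I_alpha -> F} * {ffun 'I_beta -> Ru}) :=
  (skew_mulF p i (map eta r) c.1, skew_mulR p i r c.2).

Definition scaleF n (a : F) (x : {ffun 'I_n -> F}) : {ffun 'I_n -> F} :=
  [ffun l => a * x l].
Definition scaleR n (s : Ru) (y : {ffun 'I_n -> Ru}) : {ffun 'I_n -> Ru} :=
  [ffun l => Rmul s (y l)].

Definition cshiftF n (x : {ffun 'I_n -> F}) : {ffun 'I_n -> F} :=
  [ffun l => x (ord_pred l)].
Definition sshiftR (p i n : nat) (y : {ffun 'I_n -> Ru}) : {ffun 'I_n -> Ru} :=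
  [ffun l => theta p i (y (ord_pred l))].
Definition sshiftF (p i n : nat) (x : {ffun 'I_n -> F}) : {ffun 'I_n -> F} :=
  [ffun l => Theta p i (x (ord_pred l))].

Definition cyclic_code n (C : {set {ffun 'I_n -> F}}) : Prop :=
  0 \in C /\ (forall x y, x \in C -> y \in C -> x + y \in C) /\
  (forall a x, x \in C -> scaleF a x \in C) /\
  (forall x, x \in C -> cshiftF x \in C).

Definition skew_cyclic_code_R (p i n : nat) (C : {set {ffun 'I_n -> Ru}}) : Prop :=
  0 \in C /\ (forall x y, x \in C -> y \in C -> x + y \in C) /\
  (forall s y, y \in C -> scaleR s y \in C) /\
  (forall y, y \in C -> sshiftR p i y \in C).

Definition FR_skew_cyclic_code (p i alpha beta : nat)
  (C : {set {ffun 'I_alpha -> F} * {ffun 'I_beta -> Ru}}) : Prop :=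
  0 \in C /\ (forall c d, c \in C -> d \in C -> c + d \in C) /\
  (forall s c, c \in C -> (scaleF (eta s) c.1, scaleR s c.2) \in C) /\
  (forall c, c \in C -> (sshiftF p i c.1, sshiftR p i c.2) \in C).

Definition code_prod alpha beta (A : {set {ffun 'I_alpha -> F}})
  (B : {set {ffun 'I_beta -> Ru}}) : {set {ffun 'I_alpha -> F} * {ffun 'I_beta -> Ru}} :=
  [set c | (c.1 \in A) && (c.2 \in B)].

End Defs.

(* The generators (f, 0) and (0, g) are moved only inside the first, resp. second,
   component, so C is the product of its two slices C' = {x | (x, 0) in C} and
   C'' = {y | (0, y) in C}.  For C'
   choose j with j = 1 mod alpha and j = 0 mod |<Theta>| (Chinese remainder theorem,
   using gcd(alpha, |<Theta>|) = 1): applying the skew shift j times rotates the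
   coordinates by one place and applies Theta^j = id, i.e. it is the plain cyclic
   shift, so C' is cyclic. *)

From mathcomp Require Import all_boot all_order all_algebra.
Set Implicit Arguments. Unset Strict Implicit. Unset Printing Implicit Defensive.
Import GRing.Theory.
Local Open Scope ring_scope.

Lemma pairD (U V : zmodType) (a c : U) (b d : V) : (a, b) + (c, d) = (a + c, b + d).
Proof. by []. Qed.

Lemma iter_modn (T : Type) (f : T -> T) m :
  (forall x, iter m f x = x) -> forall k x, iter k f x = iter (k %% m) f x.
Proof. by move=> fm k x; rewrite {1}(divn_eq k m) iterD iterM iter_fix. Qed.

Lemma iter_ord_pred_addn n (l : 'I_n) k : (iter k (@ord_pred n) l + k = l %[mod n])%N.
Proof.
elim: k => [|k IHk] /=; first by rewrite addn0.
rewrite -IHk; set y := iter k _ l.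
have n_gt0 : (0 < n)%N by case: n l y {IHk} => [[]|].
rewrite modnDml addnS -addSn prednK ?addn_gt0 ?n_gt0 ?orbT //.
by rewrite addnAC modnDr.
Qed.

Lemma iter_ord_pred_period n (l : 'I_n) : iter n (@ord_pred n) l = l.
Proof.
apply: val_inj; rewrite /= -[LHS](modn_small (ltn_ord _)) -[RHS](modn_small (ltn_ord l)).
by rewrite -[LHS]modnDr iter_ord_pred_addn.
Qed.

Lemma scaleF0 (F : finFieldType) n (a : F) : scaleF a (0 : {ffun 'I_n -> F}) = 0.
Proof. by apply/ffunP => l; rewrite !ffunE mulr0. Qed.

Lemma scaleR0 (F : finFieldType) n (s : Ru F) : scaleR s (0 : {ffun 'I_n -> Ru F}) = 0.
Proof. by apply/ffunP => l; rewrite !ffunE /Rmul /= !mulr0 !addr0. Qed.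

Lemma skew_mulF_nil (F : finFieldType) p i n (k : {ffun 'I_n -> F}) :
  skew_mulF p i [::] k = 0.
Proof. by apply/ffunP => l; rewrite !ffunE big_ord0. Qed.

Lemma skew_mulR_nil (F : finFieldType) p i n (t : {ffun 'I_n -> Ru F}) :
  skew_mulR p i [::] t = 0.
Proof. by apply/ffunP => l; rewrite !ffunE big_ord0. Qed.

Section SkewShift.
Variables (F : finFieldType) (p i : nat).
Hypothesis p_gt0 : (0 < p)%N.

Lemma Theta0 : Theta p i (0 : F) = 0.
Proof. by rewrite /Theta expr0n expn_eq0 eqn0Ngt p_gt0. Qed.

Lemma iter_Theta0 k : iter k (Theta p i) (0 : F) = 0.
Proof. exact/iter_fix/Theta0. Qed.

Lemma iter_theta0 k : iter k (theta p i) (0 : Ru F) = 0.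
Proof. by apply: iter_fix; rewrite /theta /= Theta0. Qed.

Lemma skew_mulF0 alpha r : skew_mulF p i r (0 : {ffun 'I_alpha -> F}) = 0.
Proof.
apply/ffunP => l; rewrite !ffunE big1 // => j _.
by rewrite big1 // => l' _; rewrite ffunE iter_Theta0 mulr0.
Qed.

Lemma skew_mulR0 beta r : skew_mulR p i r (0 : {ffun 'I_beta -> Ru F}) = 0.
Proof.
apply/ffunP => l; rewrite !ffunE big1 // => j _.
by rewrite big1 // => l' _; rewrite ffunE iter_theta0 /Rmul /= !mulr0 !addr0.
Qed.

Lemma sshiftF0 n : sshiftF p i (0 : {ffun 'I_n -> F}) = 0.
Proof. by apply/ffunP => l; rewrite !ffunE Theta0. Qed.

Lemma sshiftR0 n : sshiftR p i (0 : {ffun 'I_n -> Ru F}) = 0.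
Proof. by apply/ffunP => l; rewrite !ffunE /theta /= Theta0. Qed.

Lemma iter_sshiftF n (x : {ffun 'I_n -> F}) k l :
  iter k (@sshiftF F p i n) x l = iter k (Theta p i) (x (iter k (@ord_pred n) l)).
Proof. by elim: k l => //= k IHk l; rewrite ffunE IHk -iterSr. Qed.

Lemma cshiftF_iter_sshiftF alpha m (x : {ffun 'I_alpha -> F}) :
  (forall a : F, iter m (Theta p i) a = a) -> coprime alpha m ->
  cshiftF x = iter (chinese alpha m 1 0) (@sshiftF F p i alpha) x.
Proof.
move=> Theta_m co_alpha_m; set j := chinese alpha m 1 0.
apply/ffunP => l; rewrite iter_sshiftF ffunE.
have -> : iter j (Theta p i) (x (iter j (@ord_pred alpha) l)) =
          x (iter j (@ord_pred alpha) l).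
  by rewrite (iter_modn Theta_m) /j chinese_modr // mod0n.
rewrite (iter_modn (@iter_ord_pred_period alpha)) /j chinese_modl //.
by rewrite -(iter_modn (@iter_ord_pred_period alpha)).
Qed.

End SkewShift.

Lemma mem_split_closed (U V : zmodType) (C : {pred U * V}) :
  {in C &, forall c d, c + d \in C} ->
  {in C, forall c, ((c.1, 0) \in C) && ((0, c.2) \in C)} ->
  forall c, (c \in C) = ((c.1, 0) \in C) && ((0, c.2) \in C).
Proof.
move=> addC sliceC c; apply/idP/idP; first exact: sliceC.
by case/andP => /addC /[apply]; rewrite pairD addr0 add0r -surjective_pairing.
Qed.

Section Slices.
Variables (F : finFieldType) (p i alpha beta : nat).
Hypothesis p_gt0 : (0 < p)%N.
Variable C : {set {ffun 'I_alpha -> F} * {ffun 'I_beta -> Ru F}}.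
Hypothesis codeC : FR_skew_cyclic_code p i C.

Lemma FR_code_left_slice_cyclic m :
  (forall a : F, iter m (Theta p i) a = a) -> coprime alpha m ->
  cyclic_code [set x | (x, 0) \in C].
Proof.
case: codeC => C0 [addC [scaleC shiftC]] Theta_m co_alpha_m.
have sshiftC : {homo @sshiftF F p i alpha : x / x \in [set x | (x, 0) \in C]}.
  by move=> x; rewrite !inE => /shiftC; rewrite /= sshiftR0.
split; first by rewrite inE.
split; first by move=> x y; rewrite !inE => /addC /[apply]; rewrite pairD addr0.
split; first by move=> a x; rewrite !inE => /(scaleC (a, 0)); rewrite /= scaleR0.
by move=> x xC; rewrite (cshiftF_iter_sshiftF _ Theta_m co_alpha_m); apply: iter_in.
Qed.

Lemma FR_code_right_slice_skew_cyclic :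
  skew_cyclic_code_R p i [set y | (0, y) \in C].
Proof.
case: codeC => C0 [addC [scaleC shiftC]].
split; first by rewrite inE.
split; first by move=> x y; rewrite !inE => /addC /[apply]; rewrite pairD addr0.
split; first by move=> s y; rewrite !inE => /(scaleC s); rewrite /= scaleF0.
by move=> y; rewrite !inE => /shiftC; rewrite /= sshiftF0.
Qed.

Lemma FR_code_generated_split (f : {ffun 'I_alpha -> F}) (g : {ffun 'I_beta -> Ru F}) :
  (forall c, c \in C <->
     exists r s : seq (Ru F), c = act p i r (f, 0) + act p i s (0, g)) ->
  C = code_prod [set x | (x, 0) \in C] [set y | (0, y) \in C].
Proof.
case: codeC => _ [addC _] genC.
have sliceC : {in C, forall c, ((c.1, 0) \in C) && ((0, c.2) \in C)}.
  move=> _ /genC [r [s ->]]; rewrite /act pairD /= skew_mulF0 // skew_mulR0 // addr0 add0r.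
  apply/andP; split; apply/genC.
  - by exists r, [::]; rewrite /act pairD /= skew_mulR0 // skew_mulF0 // skew_mulR_nil !addr0.
  - by exists [::], s; rewrite /act pairD /= skew_mulR0 // skew_mulF0 // skew_mulF_nil !add0r.
by apply/setP => c; rewrite (mem_split_closed addC sliceC) /code_prod !inE.
Qed.

End Slices.

Theorem corollary1 (F : finFieldType) (p i alpha beta ordTh : nat)
  (hp : prime p) (hchar : p \in [pchar F])
  (halpha : (0 < alpha)%N) (hbeta : (0 < beta)%N)
  (hord : is_order_Theta F p i ordTh) (hcop : coprime alpha ordTh)
  (C : {set {ffun 'I_alpha -> F} * {ffun 'I_beta -> Ru F}})
  (f : {ffun 'I_alpha -> F}) (g : {ffun 'I_beta -> Ru F})
  (hC : FR_skew_cyclic_code p i C)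
  (hgen : forall c, c \in C <->
     exists r s : seq (Ru F), c = act p i r (f, 0) + act p i s (0, g)) :
  exists (C1 : {set {ffun 'I_alpha -> F}}) (C2 : {set {ffun 'I_beta -> Ru F}}),
    cyclic_code C1 /\ skew_cyclic_code_R p i C2 /\ C = code_prod C1 C2.
Proof.
have p_gt0 := prime_gt0 hp.
case: hord => _ [Theta_ordTh _].
exists [set x | (x, 0) \in C], [set y | (0, y) \in C]; split; last split.
- exact: FR_code_left_slice_cyclic Theta_ordTh hcop.
- exact: FR_code_right_slice_skew_cyclic.
- exact: FR_code_generated_split hgen.
Qed.
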